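(* Let $F\in\Gamma_0(\mathbb{R}_+)$ have a strict minimum at $s=1$ (i.e. $F(s)>0$ for $s\neq1$), let $X$ be a set and $c:X\times X\to[0,+\infty]$ be symmetric with $c(x_1,x_2)=0$ if and only if $x_1=x_2$. Then the induced marginal perspective cost $H(x_1,r_1;x_2,r_2):=H_{c(x_1,x_2)}(r_1,r_2)$ is non-negative, symmetric ($H(x_1,r_1;x_2,r_2)=H(x_2,r_2;x_1,r_1)$), and $H(x_1,r_1;x_2,r_2)=0$ if and only if either $r_1=r_2=0$, or $r_1=r_2$ and $x_1=x_2$.
   Context: $\Gamma_0(\mathbb{R}_+)$ is the set of functions $F:[0,\infty)\to[0,\infty]$ that are convex, lower semicontinuous, with $F(1)=0$. For $F\in\Gamma_0(\mathbb{R}_+)$: $\mathrm{rec}(F)(r)=\lim_{\alpha\to\infty}F(1+\alpha r)/\alpha$, $F'_\infty:=\mathrm{rec}(F)(1)$; the perspective function is $\hat F(r,t)=tF(r/t)$ for $t>0$, $\hat F(r,0)=\mathrm{rec}(F)(r)$. For $c\in[0,\infty)$ the marginal perspective function $H_c:[0,\infty)^2\to[0,\infty]$ is the lower semicontinuous envelope of $\tilde H_c(r_1,r_2)=\inf_{\theta>0}\big[\hat F(\theta,r_1)+\hat F(\theta,r_2)+\theta c\big]$ (for $r_1,r_2>0$ this equals $\inf_{\theta>0}[r_1F(\theta/r_1)+r_2F(\theta/r_2)+\theta c]$), and for $c=+\infty$, $H_\infty(r_1,r_2)=F(0)(r_1+r_2)$. *)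

From Stdlib Require Import Reals Lra ClassicalEpsilon.
Open Scope R_scope.

(** Extended reals R ∪ {+∞} (only values in [0,+∞] are used). *)
Inductive ER : Type := Fin (x : R) | PInf.

Definition ER_le (a b : ER) : Prop :=
  match a, b with
  | Fin x, Fin y => x <= y
  | _, PInf => True
  | PInf, Fin _ => False
  end.

Definition ER_lt (a b : ER) : Prop :=
  match a, b with
  | Fin x, Fin y => x < y
  | Fin _, PInf => True
  | PInf, _ => False
  end.

Definition ER_plus (a b : ER) : ER :=
  match a, b with
  | Fin x, Fin y => Fin (x + y)
  | _, _ => PInf
  end.

(** Multiplication by a real scalar t >= 0, with the convention 0 * (+∞) = 0. *)
Definition ER_scal (t : R) (a : ER) : ER :=
  match a with
  | Fin x => Fin (t * x)
  | PInf => if Req_EM_T t 0 then Fin 0 else PInf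
  end.

Definition ER_is_glb (P : ER -> Prop) (m : ER) : Prop :=
  (forall v, P v -> ER_le m v) /\
  (forall m', (forall v, P v -> ER_le m' v) -> ER_le m' m).
Definition ER_is_lub (P : ER -> Prop) (m : ER) : Prop :=
  (forall v, P v -> ER_le v m) /\
  (forall m', (forall v, P v -> ER_le v m') -> ER_le m m').
Definition ER_inf (P : ER -> Prop) : ER := epsilon (inhabits PInf) (ER_is_glb P).
Definition ER_sup (P : ER -> Prop) : ER := epsilon (inhabits PInf) (ER_is_lub P).

Definition ER_lim_infty (f : R -> ER) (l : ER) : Prop :=
  match l with
  | Fin L => forall eps, 0 < eps -> exists M, forall a, M < a ->
               exists v, f a = Fin v /\ Rabs (v - L) < eps
  | PInf => forall K, exists M, forall a, M < a -> ER_lt (Fin K) (f a)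
  end.

Definition ER_lim (f : R -> ER) : ER := epsilon (inhabits PInf) (ER_lim_infty f).

Definition convex_Rp (F : R -> ER) : Prop :=
  forall x y l, 0 <= x -> 0 <= y -> 0 <= l <= 1 ->
    ER_le (F (l * x + (1 - l) * y)) (ER_plus (ER_scal l (F x)) (ER_scal (1 - l) (F y))).

Definition lsc_Rp (F : R -> ER) : Prop :=
  forall p, 0 <= p -> forall a, ER_lt (Fin a) (F p) ->
    exists d, 0 < d /\ forall q, 0 <= q -> Rabs (q - p) < d -> ER_lt (Fin a) (F q).

(** Gamma_0(R_+): F : [0,∞) -> [0,∞] convex, lsc, F(1) = 0.
    (F is a total function on R; only its values on [0,∞) matter.) *)
Definition Gamma0 (F : R -> ER) : Prop :=
  (forall s, 0 <= s -> ER_le (Fin 0) (F s)) /\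
  convex_Rp F /\ lsc_Rp F /\ F 1 = Fin 0.

Definition recF (F : R -> ER) (r : R) : ER :=
  ER_lim (fun a => ER_scal (/ a) (F (1 + a * r))).

Definition hatF (F : R -> ER) (r t : R) : ER :=
  if Rlt_dec 0 t then ER_scal t (F (r / t)) else recF F r.

Definition Htilde (F : R -> ER) (c r1 r2 : R) : ER :=
  ER_inf (fun v => exists th, 0 < th /\
            v = ER_plus (ER_plus (hatF F th r1) (hatF F th r2)) (Fin (th * c))).

Definition lsc_Rp2 (h : R -> R -> ER) : Prop :=
  forall p1 p2, 0 <= p1 -> 0 <= p2 -> forall a, ER_lt (Fin a) (h p1 p2) ->
    exists d, 0 < d /\ forall q1 q2, 0 <= q1 -> 0 <= q2 ->
      Rabs (q1 - p1) < d -> Rabs (q2 - p2) < d -> ER_lt (Fin a) (h q1 q2).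

Definition lsc_env (g : R -> R -> ER) (r1 r2 : R) : ER :=
  ER_sup (fun v => exists h : R -> R -> ER, lsc_Rp2 h /\
            (forall q1 q2, 0 <= q1 -> 0 <= q2 -> ER_le (h q1 q2) (g q1 q2)) /\
            v = h r1 r2).

Definition Hmarg (F : R -> ER) (c : ER) (r1 r2 : R) : ER :=
  match c with
  | Fin c0 => lsc_env (Htilde F c0) r1 r2
  | PInf => ER_scal (r1 + r2) (F 0)
  end.

Definition Hcost {X : Type} (F : R -> ER) (c : X -> X -> ER)
  (x1 : X) (r1 : R) (x2 : X) (r2 : R) : ER :=
  Hmarg F (c x1 x2) r1 r2.

(** Let F ∈ Γ0(R+) have a strict minimum at 1.  Everything rests on one
   quantitative consequence of convexity at a strict minimum: for each
   d ∈ (0,1] there is k > 0 with F(s) ≥ k (|s-1| - d) for all s ≥ 0.  By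
   homogeneity of the perspective, and by monotonicity of the difference
   quotients α ↦ F(1+αθ)/α defining the recession function, this yields
   hatF(θ,q) ≥ k/2 · max(0, |θ-q| - d q) for all θ > 0, q ≥ 0.  Hence every
   term hatF(θ,r1) + hatF(θ,r2) + θc of the infimum defining H̃_c is bounded
   below by explicit affine functions of (r1,r2); affine functions are lower
   semicontinuous, so these bounds pass to the lsc envelope H_c.  Suitable
   choices of d give H_c ≥ 0, H_c(r1,r2) > 0 if r1 ≠ r2, and H_c(r1,r2) > 0 if
   c > 0 and r1 + r2 > 0.  Conversely H̃_c(q,q) ≤ q c (take θ = q), and lower
   semicontinuity of the minorants at (r,r) gives H_c(r,r) ≤ 0 when r c = 0.
   Symmetry is inherited from H̃_c; the case c = +∞ is read off from F(0) > 0. *)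

From Stdlib Require Import Reals Lra ClassicalEpsilon Classical
  FunctionalExtensionality PropExtensionality.
Open Scope R_scope.

Lemma ER_le_PInf x : ER_le x PInf.
Proof. destruct x; exact I. Qed.

Lemma ER_le_refl x : ER_le x x.
Proof. destruct x; simpl; auto; lra. Qed.

Lemma ER_le_trans a b e : ER_le a b -> ER_le b e -> ER_le a e.
Proof. destruct a, b, e; simpl; try tauto; lra. Qed.

Lemma ER_lt_le_trans a b e : ER_lt a b -> ER_le b e -> ER_lt a e.
Proof. destruct a, b, e; simpl; try tauto; lra. Qed.

Lemma ER_le_or_lt a b : ER_le a b \/ ER_lt b a.
Proof. destruct a, b; simpl; auto. destruct (Rle_lt_dec x x0); auto. Qed.

Lemma ER_le_Fin_mono a b e : b <= a -> ER_le (Fin a) e -> ER_le (Fin b) e.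
Proof. destruct e; simpl; auto; lra. Qed.

Lemma ER_le_lt_Fin a b e : ER_le (Fin a) e -> b < a -> ER_lt (Fin b) e.
Proof. destruct e; simpl; auto; lra. Qed.

Lemma ER_lt_Fin_ex x e : ER_lt (Fin x) e -> exists y, x < y /\ ER_le (Fin y) e.
Proof.
  destruct e as [z|]; simpl; intros Hlt.
  - exists z; split; lra.
  - exists (x + 1); split; [lra|exact I].
Qed.

Lemma ER_le_antisym_0 x : ER_le (Fin 0) x -> ER_le x (Fin 0) -> x = Fin 0.
Proof. destruct x; simpl; intros; [f_equal; lra|contradiction]. Qed.

Lemma ER_le_plus a b e1 e2 :
  ER_le (Fin a) e1 -> ER_le (Fin b) e2 -> ER_le (Fin (a + b)) (ER_plus e1 e2).
Proof. destruct e1, e2; simpl; auto; lra. Qed.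

Lemma ER_plus_comm a b : ER_plus a b = ER_plus b a.
Proof. destruct a, b; simpl; auto. f_equal; ring. Qed.

Lemma ER_le_max a b e :
  ER_le (Fin a) e -> ER_le (Fin b) e -> ER_le (Fin (Rmax a b)) e.
Proof. intros. unfold Rmax; destruct (Rle_dec a b); auto. Qed.

Lemma ER_scal_PInf t : t <> 0 -> ER_scal t PInf = PInf.
Proof. intros Ht. simpl. destruct (Req_EM_T t 0); [contradiction|reflexivity]. Qed.

Lemma ER_le_scal q a e : 0 < q -> ER_le (Fin a) e -> ER_le (Fin (q * a)) (ER_scal q e).
Proof.
  intros Hq. destruct e as [x|]; simpl; intros Ha.
  - apply Rmult_le_compat_l; lra.
  - destruct (Req_EM_T q 0); [lra|exact I].
Qed.

Lemma ER_scal_pos_zero s v : 0 <= s -> ER_lt (Fin 0) v ->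
  ER_le (Fin 0) (ER_scal s v) /\ (ER_scal s v = Fin 0 <-> s = 0).
Proof.
  intros Hs Hv. destruct v as [x|]; simpl in *.
  - split; [nra|split].
    + intros E; injection E; nra.
    + intros ->; f_equal; ring.
  - destruct (Req_EM_T s 0) as [Hs0|Hs0].
    + simpl; split; [lra|tauto].
    + split; [exact I|split; [discriminate|contradiction]].
Qed.

(** Completeness: infima of sets bounded below and suprema of nonempty sets
    exist in [0,+∞], so [ER_inf] and [ER_sup] have their defining properties. *)

Lemma glb_exists (P : ER -> Prop) b :
  (forall v, P v -> ER_le (Fin b) v) -> exists m, ER_is_glb P m.
Proof.
  intros Hb.
  destruct (classic (exists x, P (Fin x))) as [[x0 Hx0]|Hnone].
  - set (E := fun y => P (Fin (- y))).
    assert (Hbd : bound E).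
    { exists (- b). intros y Ey. specialize (Hb _ Ey). simpl in Hb. lra. }
    assert (HE : exists y, E y)
      by (exists (- x0); unfold E; rewrite Ropp_involutive; auto).
    destruct (completeness E Hbd HE) as [m [Hub Hleast]].
    exists (Fin (- m)). split.
    + intros [x|] Hx; simpl; auto.
      assert (E (- x)) by (unfold E; rewrite Ropp_involutive; auto).
      specialize (Hub _ H). lra.
    + intros [z|] Hz; simpl.
      * assert (is_upper_bound E (- z)).
        { intros y Ey. specialize (Hz _ Ey). simpl in Hz. lra. }
        specialize (Hleast _ H). lra.
      * exact (Hz _ Hx0).
  - exists PInf. split.
    + intros [x|] Hx; simpl; auto. exfalso; eauto.
    + intros; apply ER_le_PInf.
Qed.

Lemma lub_exists (P : ER -> Prop) : (exists v, P v) -> exists m, ER_is_lub P m.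
Proof.
  intros [v0 Hv0].
  destruct (classic (P PInf)) as [HP|HnP].
  - exists PInf. split; [intros; apply ER_le_PInf|].
    intros m' Hm'. specialize (Hm' _ HP). destruct m'; simpl in *; auto.
  - assert (Hfin : forall v, P v -> exists x, v = Fin x).
    { intros [x|] Hv; eauto. contradiction. }
    set (E := fun x => P (Fin x)).
    assert (HE : exists y, E y) by (destruct (Hfin _ Hv0) as [x ->]; exists x; auto).
    destruct (classic (bound E)) as [Hbd|Hunb].
    + destruct (completeness E Hbd HE) as [m [Hub Hleast]].
      exists (Fin m). split.
      * intros v Hv. destruct (Hfin _ Hv) as [x ->]. simpl. apply Hub. exact Hv.
      * intros [z|] Hz; simpl; auto. apply Hleast. intros y Ey. exact (Hz _ Ey).
    + exists PInf. split; [intros; apply ER_le_PInf|].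
      intros [z|] Hz; simpl; auto. apply Hunb. exists z. intros y Ey. exact (Hz _ Ey).
Qed.

Lemma inf_lower_bound (P : ER -> Prop) b v :
  (forall w, P w -> ER_le (Fin b) w) -> P v -> ER_le (ER_inf P) v.
Proof.
  intros Hb Hv. unfold ER_inf.
  destruct (epsilon_spec (inhabits PInf) (ER_is_glb P) (glb_exists P b Hb)) as [H _].
  auto.
Qed.

Lemma inf_greatest (P : ER -> Prop) b m :
  (forall w, P w -> ER_le (Fin b) w) ->
  (forall w, P w -> ER_le m w) -> ER_le m (ER_inf P).
Proof.
  intros Hb Hm. unfold ER_inf.
  destruct (epsilon_spec (inhabits PInf) (ER_is_glb P) (glb_exists P b Hb)) as [_ H].
  auto.
Qed.

Lemma sup_upper_bound (P : ER -> Prop) v : P v -> ER_le v (ER_sup P).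
Proof.
  intros Hv. unfold ER_sup.
  destruct (epsilon_spec (inhabits PInf) (ER_is_lub P) (lub_exists P (ex_intro _ v Hv)))
    as [H _].
  auto.
Qed.

Lemma sup_least (P : ER -> Prop) m :
  (exists v, P v) -> (forall w, P w -> ER_le w m) -> ER_le (ER_sup P) m.
Proof.
  intros Hv Hm. unfold ER_sup.
  destruct (epsilon_spec (inhabits PInf) (ER_is_lub P) (lub_exists P Hv)) as [_ H].
  auto.
Qed.

(** A function nondecreasing on (0,+∞) has a limit at +∞, which dominates
    all its values; this is what makes the recession function usable. *)

Section MonotoneLimit.

Variable f : R -> ER.
Hypothesis f_mono : forall a b, 0 < a -> a <= b -> ER_le (f a) (f b).

Lemma mono_lim_exists : exists l, ER_lim_infty f l.
Proof.
  destruct (classic (exists b, 0 < b /\ f b = PInf)) as [[b [Hb Eb]]|Hfinite].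
  - exists PInf. intros K. exists b. intros a Ha.
    pose proof (f_mono b a Hb (Rlt_le _ _ Ha)) as H. rewrite Eb in H.
    destruct (f a); simpl in *; tauto.
  - assert (Hfin : forall b, 0 < b -> exists y, f b = Fin y).
    { intros b Hb. destruct (f b) eqn:E; eauto. exfalso; apply Hfinite; eauto. }
    set (E := fun y => exists b, 0 < b /\ f b = Fin y).
    assert (HE : exists y, E y).
    { destruct (Hfin 1 Rlt_0_1) as [y Hy]. exists y, 1. split; auto; lra. }
    destruct (classic (bound E)) as [Hbd|Hunb].
    + destruct (completeness E Hbd HE) as [L [Hub Hleast]].
      exists (Fin L). intros eps Heps.
      destruct (classic (exists y, E y /\ L - eps < y)) as [[y [[b [Hb Eb]] Hy]]|Hn].
      * exists b. intros a Ha.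
        destruct (Hfin a ltac:(lra)) as [v Ev]. exists v; split; auto.
        pose proof (f_mono b a Hb (Rlt_le _ _ Ha)) as H. rewrite Eb, Ev in H. simpl in H.
        assert (v <= L) by (apply Hub; exists a; split; auto; lra).
        apply Rabs_def1; lra.
      * exfalso.
        assert (is_upper_bound E (L - eps)).
        { intros y Ey. destruct (Rle_dec y (L - eps)); auto.
          exfalso; apply Hn. exists y; split; auto; lra. }
        specialize (Hleast _ H). lra.
    + exists PInf. intros K.
      destruct (classic (exists y, E y /\ K < y)) as [[y [[b [Hb Eb]] Hy]]|Hn].
      * exists b. intros a Ha.
        pose proof (f_mono b a Hb (Rlt_le _ _ Ha)) as H. rewrite Eb in H.
        destruct (f a); simpl in *; auto; lra.
      * exfalso. apply Hunb. exists K. intros y Ey.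
        destruct (Rle_dec y K); auto. exfalso; apply Hn; exists y; split; auto; lra.
Qed.

Lemma mono_lim_ge a0 l : 0 < a0 -> ER_lim_infty f l -> ER_le (f a0) l.
Proof.
  intros Ha0 Hl. destruct l as [L|]; [|apply ER_le_PInf].
  destruct (ER_le_or_lt (f a0) (Fin L)) as [|Hgt]; auto. exfalso.
  destruct (ER_lt_Fin_ex _ _ Hgt) as [y [HLy Hy]].
  destruct (Hl (y - L) ltac:(lra)) as [M HM].
  set (a := Rmax M a0 + 1).
  assert (HMa : M < a) by (unfold a; pose proof (Rmax_l M a0); lra).
  assert (Ha0a : a0 <= a) by (unfold a; pose proof (Rmax_r M a0); lra).
  destruct (HM a HMa) as [v [Ev Hv]].
  pose proof (ER_le_trans _ _ _ Hy (f_mono a0 a Ha0 Ha0a)) as Hyv.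
  rewrite Ev in Hyv. simpl in Hyv.
  pose proof (Rle_abs (v - L)). lra.
Qed.

Lemma ER_lim_ge_mono a0 : 0 < a0 -> ER_le (f a0) (ER_lim f).
Proof.
  intros Ha0. apply mono_lim_ge; auto.
  unfold ER_lim. apply epsilon_spec, mono_lim_exists.
Qed.

End MonotoneLimit.

(** [cone_gap d θ q = max(0, |θ - q| - d q)] is q times the amount by which
    θ/q lies outside the interval [1-d, 1+d]. *)
Definition cone_gap (d th q : R) : R := Rmax 0 (Rabs (th - q) - d * q).

Lemma cone_gap_nonneg d th q : 0 <= cone_gap d th q.
Proof. apply Rmax_l. Qed.

Lemma cone_gap_ge_below d th q : (1 - d) * q - th <= cone_gap d th q.
Proof.
  unfold cone_gap. eapply Rle_trans; [|apply Rmax_r].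
  pose proof (Rle_abs (q - th)) as H. rewrite Rabs_minus_sym in H. lra.
Qed.

Lemma cone_gap_ge_above d th q : th - (1 + d) * q <= cone_gap d th q.
Proof.
  unfold cone_gap. eapply Rle_trans; [|apply Rmax_r].
  pose proof (Rle_abs (th - q)). lra.
Qed.

Lemma cone_gap_half_sum th q1 q2 :
  (q1 + q2) / 4 <= cone_gap (1/2) th q1 + cone_gap (1/2) th q2 + th.
Proof.
  pose proof (cone_gap_nonneg (1/2) th q1). pose proof (cone_gap_nonneg (1/2) th q2).
  pose proof (cone_gap_ge_below (1/2) th q1). pose proof (cone_gap_ge_below (1/2) th q2).
  destruct (Rle_dec th ((q1 + q2) / 4)); lra.
Qed.

Definition mp_integrand (F : R -> ER) (c th q1 q2 : R) : ER :=
  ER_plus (ER_plus (hatF F th q1) (hatF F th q2)) (Fin (th * c)).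

Lemma Htilde_sym F c q1 q2 : Htilde F c q1 q2 = Htilde F c q2 q1.
Proof.
  unfold Htilde. f_equal. apply functional_extensionality. intro v.
  apply propositional_extensionality.
  split; intros [th [Hth ->]]; exists th; split; auto; f_equal; apply ER_plus_comm.
Qed.

Lemma lsc_affine al be ga : lsc_Rp2 (fun q1 q2 => Fin (al * q1 + be * q2 + ga)).
Proof.
  intros p1 p2 Hp1 Hp2 a Ha. simpl in Ha.
  set (K := Rabs al + Rabs be + 1).
  assert (HK : 0 < K) by (unfold K; pose proof (Rabs_pos al); pose proof (Rabs_pos be); lra).
  exists ((al * p1 + be * p2 + ga - a) / K). split.
  - apply Rdiv_lt_0_compat; lra.
  - intros q1 q2 _ _ H1 H2. simpl.
    set (d := (al * p1 + be * p2 + ga - a) / K) in *.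
    assert (Hd : d * K = al * p1 + be * p2 + ga - a) by (unfold d; field; lra).
    assert (A1 : Rabs (al * (q1 - p1)) <= Rabs al * d).
    { rewrite Rabs_mult. apply Rmult_le_compat_l; [apply Rabs_pos|lra]. }
    assert (A2 : Rabs (be * (q2 - p2)) <= Rabs be * d).
    { rewrite Rabs_mult. apply Rmult_le_compat_l; [apply Rabs_pos|lra]. }
    pose proof (Rle_abs (- (al * (q1 - p1)))) as B1. rewrite Rabs_Ropp in B1.
    pose proof (Rle_abs (- (be * (q2 - p2)))) as B2. rewrite Rabs_Ropp in B2.
    assert (0 < d) by (pose proof (Rabs_pos (q1 - p1)); lra).
    unfold K in Hd. nra.
Qed.

Lemma lsc_swap (h : R -> R -> ER) : lsc_Rp2 h -> lsc_Rp2 (fun x y => h y x).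
Proof.
  intros Hh p1 p2 Hp1 Hp2 a Ha. destruct (Hh p2 p1 Hp2 Hp1 a Ha) as [d [Hd Hnear]].
  exists d; split; [exact Hd|]. intros q1 q2 Hq1 Hq2 H1 H2. apply Hnear; auto.
Qed.

Lemma env_ge_affine (g : R -> R -> ER) al be ga :
  (forall q1 q2, 0 <= q1 -> 0 <= q2 -> ER_le (Fin (al * q1 + be * q2 + ga)) (g q1 q2)) ->
  forall r1 r2, ER_le (Fin (al * r1 + be * r2 + ga)) (lsc_env g r1 r2).
Proof.
  intros Hg r1 r2. unfold lsc_env. apply sup_upper_bound.
  exists (fun q1 q2 => Fin (al * q1 + be * q2 + ga)).
  split; [apply lsc_affine|split; [exact Hg|reflexivity]].
Qed.

Lemma env_le (g : R -> R -> ER) b m r1 r2 :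
  (forall q1 q2, 0 <= q1 -> 0 <= q2 -> ER_le (Fin b) (g q1 q2)) ->
  (forall h : R -> R -> ER, lsc_Rp2 h ->
     (forall q1 q2, 0 <= q1 -> 0 <= q2 -> ER_le (h q1 q2) (g q1 q2)) ->
     ER_le (h r1 r2) m) ->
  ER_le (lsc_env g r1 r2) m.
Proof.
  intros Hb Hall. unfold lsc_env. apply sup_least.
  - exists (Fin (0 * r1 + 0 * r2 + b)), (fun q1 q2 => Fin (0 * q1 + 0 * q2 + b)).
    split; [apply lsc_affine|split; [|reflexivity]].
    intros q1 q2 Hq1 Hq2. eapply ER_le_Fin_mono; [|apply Hb; auto]. lra.
  - intros w [h [Hh [Hle ->]]]. auto.
Qed.

Lemma env_sym (g : R -> R -> ER) : (forall q1 q2, g q1 q2 = g q2 q1) ->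
  forall r1 r2, lsc_env g r1 r2 = lsc_env g r2 r1.
Proof.
  intros Hg r1 r2. unfold lsc_env. f_equal. apply functional_extensionality. intro v.
  apply propositional_extensionality.
  split; intros [h [Hh [Hle ->]]]; exists (fun x y => h y x);
    (split; [apply lsc_swap, Hh|split; [|reflexivity]]);
    intros q1 q2 Hq1 Hq2; rewrite Hg; auto.
Qed.

Lemma env_diag_nonpos (g : R -> R -> ER) b C r : 0 <= C -> 0 <= r ->
  (forall q1 q2, 0 <= q1 -> 0 <= q2 -> ER_le (Fin b) (g q1 q2)) ->
  (forall e, 0 < e -> ER_le (g (r + e) (r + e)) (Fin (e * C))) ->
  ER_le (lsc_env g r r) (Fin 0).
Proof.
  intros HC Hr Hb Hdiag. apply (env_le g b); auto.
  intros h Hh Hle.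
  destruct (ER_le_or_lt (h r r) (Fin 0)) as [|Hpos]; auto. exfalso.
  destruct (ER_lt_Fin_ex _ _ Hpos) as [a [Ha Hah]].
  destruct (Hh r r Hr Hr (a / 2) (ER_le_lt_Fin a (a / 2) _ Hah ltac:(lra))) as [dl [Hdl Hnear]].
  set (e := Rmin (dl / 2) (a / (4 * (C + 1)))).
  assert (He : 0 < e) by (apply Rmin_pos; [lra|apply Rdiv_lt_0_compat; lra]).
  assert (HeC : e * C <= a / 4).
  { assert (Hea : e <= a / (4 * (C + 1))) by apply Rmin_r.
    apply Rmult_le_compat_r with (r := 4 * (C + 1)) in Hea; [|lra].
    replace (a / (4 * (C + 1)) * (4 * (C + 1))) with a in Hea by (field; lra). nra. }
  assert (Hdist : Rabs (r + e - r) < dl).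
  { replace (r + e - r) with e by ring. rewrite Rabs_right by lra.
    assert (e <= dl / 2) by apply Rmin_l. lra. }
  pose proof (Hnear (r + e) (r + e) ltac:(lra) ltac:(lra) Hdist Hdist) as Hbig.
  pose proof (ER_le_trans _ _ _ (Hle (r + e) (r + e) ltac:(lra) ltac:(lra)) (Hdiag e He))
    as Hsmall.
  pose proof (ER_lt_le_trans _ _ _ Hbig Hsmall) as Hcontra. simpl in Hcontra. lra.
Qed.

Section StrictMinimum.

Variable F : R -> ER.
Hypothesis F_nonneg : forall s, 0 <= s -> ER_le (Fin 0) (F s).
Hypothesis F_convex : convex_Rp F.
Hypothesis F_one : F 1 = Fin 0.
Hypothesis F_strict : forall s, 0 <= s -> s <> 1 -> ER_lt (Fin 0) (F s).

Lemma convex_toward_one s l : 0 <= s -> 0 <= l <= 1 ->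
  ER_le (F (1 + l * (s - 1))) (ER_scal l (F s)).
Proof.
  intros Hs Hl.
  pose proof (F_convex s 1 l Hs ltac:(lra) Hl) as H.
  replace (l * s + (1 - l) * 1) with (1 + l * (s - 1)) in H by ring.
  rewrite F_one in H.
  destruct (F (1 + l * (s - 1))) as [u|], (F s) as [v|];
    simpl in *; try destruct (Req_EM_T l 0); simpl in *; auto; lra.
Qed.

Lemma slope_mono t : 0 <= t -> forall a b, 0 < a -> a <= b ->
  ER_le (ER_scal (/ a) (F (1 + a * t))) (ER_scal (/ b) (F (1 + b * t))).
Proof.
  intros Ht a b Ha Hab.
  assert (Hlb : a / b * b = a) by (field; lra).
  assert (Hl : 0 <= a / b <= 1) by (split; nra).
  pose proof (convex_toward_one (1 + b * t) (a / b) ltac:(nra) Hl) as H.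
  replace (1 + a / b * (1 + b * t - 1)) with (1 + a * t) in H by (field; lra).
  destruct (F (1 + b * t)) as [w|].
  - destruct (F (1 + a * t)) as [u|]; simpl in *; [|contradiction].
    apply Rmult_le_reg_l with a; [lra|].
    replace (a * (/ a * u)) with u by (field; lra).
    replace (a * (/ b * w)) with (a / b * w) by (field; lra). exact H.
  - rewrite (ER_scal_PInf (/ b)) by (apply Rinv_neq_0_compat; lra). apply ER_le_PInf.
Qed.

Lemma recF_ge t a : 0 <= t -> 0 < a ->
  ER_le (ER_scal (/ a) (F (1 + a * t))) (recF F t).
Proof. intros Ht Ha. exact (ER_lim_ge_mono _ (slope_mono t Ht) a Ha). Qed.

Lemma sphere_bound d : 0 < d <= 1 -> exists k, 0 < k /\
  forall p, 0 <= p -> Rabs (p - 1) = d -> ER_le (Fin (k * d)) (F p).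
Proof.
  intros Hd.
  destruct (ER_lt_Fin_ex _ _ (F_strict (1 - d) ltac:(lra) ltac:(lra))) as [y1 [Hy1 Hle1]].
  destruct (ER_lt_Fin_ex _ _ (F_strict (1 + d) ltac:(lra) ltac:(lra))) as [y2 [Hy2 Hle2]].
  exists (Rmin y1 y2 / d). split.
  - apply Rdiv_lt_0_compat; [apply Rmin_pos|]; lra.
  - intros p Hp Hpd. replace (Rmin y1 y2 / d * d) with (Rmin y1 y2) by (field; lra).
    unfold Rabs in Hpd. destruct (Rcase_abs (p - 1)).
    + replace p with (1 - d) by lra. apply ER_le_Fin_mono with y1; [apply Rmin_l|auto].
    + replace p with (1 + d) by lra. apply ER_le_Fin_mono with y2; [apply Rmin_r|auto].
Qed.

Lemma cone_bound d k : 0 < d -> 0 <= k ->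
  (forall p, 0 <= p -> Rabs (p - 1) = d -> ER_le (Fin (k * d)) (F p)) ->
  forall s, 0 <= s -> ER_le (Fin (k * (Rabs (s - 1) - d))) (F s).
Proof.
  intros Hd Hk Hsphere s Hs.
  destruct (Rle_dec (Rabs (s - 1)) d) as [Hnear|Hfar].
  - apply ER_le_Fin_mono with 0; [nra|auto].
  - set (l := d / Rabs (s - 1)).
    assert (HlA : l * Rabs (s - 1) = d) by (unfold l; field; lra).
    assert (Hl : 0 <= l <= 1) by (split; nra).
    assert (Hp : Rabs (1 + l * (s - 1) - 1) = d).
    { replace (1 + l * (s - 1) - 1) with (l * (s - 1)) by ring.
      rewrite Rabs_mult, (Rabs_right l) by lra. exact HlA. }
    assert (Hp0 : 0 <= 1 + l * (s - 1)) by nra.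
    pose proof (ER_le_trans _ _ _ (Hsphere _ Hp0 Hp) (convex_toward_one s l Hs Hl)) as Hkl.
    destruct (F s) as [v|]; [|exact I]. simpl in Hkl |- *.
    assert (Hmul : k * d * Rabs (s - 1) <= d * v).
    { apply (Rmult_le_compat_r (Rabs (s - 1))) in Hkl; [nra|apply Rabs_pos]. }
    assert (k * Rabs (s - 1) <= v) by (apply Rmult_le_reg_l with d; nra). nra.
Qed.

Lemma hatF_cone_bound d k : 0 < d -> 0 <= k ->
  (forall s, 0 <= s -> ER_le (Fin (k * (Rabs (s - 1) - d))) (F s)) ->
  forall th q, 0 < th -> 0 <= q -> ER_le (Fin (k / 2 * cone_gap d th q)) (hatF F th q).
Proof.
  intros Hd Hk Hcone th q Hth Hq. unfold hatF.
  destruct (Rlt_dec 0 q) as [Hqpos|Hq0].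
  - assert (Hs : 0 <= th / q) by (apply Rlt_le, Rdiv_lt_0_compat; lra).
    pose proof (ER_le_scal q _ _ Hqpos (ER_le_max _ _ _ (F_nonneg _ Hs) (Hcone _ Hs))) as B.
    eapply ER_le_Fin_mono; [|exact B].
    assert (Hscale : q * (k * (Rabs (th / q - 1) - d)) = k * (Rabs (th - q) - d * q)).
    { replace (th - q) with (q * (th / q - 1)) by (field; lra).
      rewrite Rabs_mult, (Rabs_right q) by lra. ring. }
    unfold cone_gap, Rmax in *. repeat destruct Rle_dec; nra.
  - assert (q = 0) by lra. subst q.
    pose proof (recF_ge th (2 * d / th) (Rlt_le _ _ Hth)
                  ltac:(apply Rdiv_lt_0_compat; lra)) as Hrec.
    replace (1 + 2 * d / th * th) with (1 + 2 * d) in Hrec by (field; lra).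
    pose proof (ER_le_scal (/ (2 * d / th)) _ _
                  ltac:(apply Rinv_0_lt_compat, Rdiv_lt_0_compat; lra)
                  (Hcone (1 + 2 * d) ltac:(lra))) as B.
    eapply ER_le_Fin_mono; [|exact (ER_le_trans _ _ _ B Hrec)].
    assert (Hgap : cone_gap d th 0 = th).
    { unfold cone_gap. rewrite Rminus_0_r, Rmult_0_r, Rminus_0_r, Rabs_right by lra.
      apply Rmax_right; lra. }
    replace (1 + 2 * d - 1) with (2 * d) by ring.
    rewrite Hgap, Rabs_right by lra. apply Req_le. field. lra.
Qed.

Lemma integrand_cone_bound d : 0 < d <= 1 -> exists k, 0 < k /\
  forall c th q1 q2, 0 < th -> 0 <= q1 -> 0 <= q2 ->
    ER_le (Fin (k * (cone_gap d th q1 + cone_gap d th q2) + th * c))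
          (mp_integrand F c th q1 q2).
Proof.
  intros Hd.
  destruct (sphere_bound d Hd) as [k [Hk Hsphere]].
  pose proof (cone_bound d k ltac:(lra) ltac:(lra) Hsphere) as Hcone.
  exists (k / 2). split; [lra|]. intros c th q1 q2 Hth Hq1 Hq2.
  unfold mp_integrand. rewrite Rmult_plus_distr_l.
  apply ER_le_plus; [apply ER_le_plus|apply ER_le_refl];
    apply hatF_cone_bound; auto; lra.
Qed.

Lemma hatF_diag q : 0 < q -> hatF F q q = Fin 0.
Proof.
  intros Hq. unfold hatF. destruct (Rlt_dec 0 q); [|lra].
  replace (q / q) with 1 by (field; lra). rewrite F_one. simpl. f_equal; ring.
Qed.

Section FiniteCost.

Variable c : R.
Hypothesis c_nonneg : 0 <= c.

Lemma integrand_nonneg th q1 q2 : 0 < th -> 0 <= q1 -> 0 <= q2 ->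
  ER_le (Fin 0) (mp_integrand F c th q1 q2).
Proof.
  intros Hth Hq1 Hq2.
  destruct (integrand_cone_bound (1/2) ltac:(lra)) as [k [Hk Hbound]].
  eapply ER_le_Fin_mono; [|apply Hbound; auto].
  pose proof (cone_gap_nonneg (1/2) th q1). pose proof (cone_gap_nonneg (1/2) th q2).
  nra.
Qed.

Lemma Htilde_ge y q1 q2 :
  (forall th, 0 < th -> ER_le (Fin y) (mp_integrand F c th q1 q2)) ->
  ER_le (Fin y) (Htilde F c q1 q2).
Proof.
  intros H. unfold Htilde.
  apply inf_greatest with y; intros w [th [Hth ->]]; apply H; auto.
Qed.

Lemma Htilde_le_integrand th q1 q2 : 0 < th -> 0 <= q1 -> 0 <= q2 ->
  ER_le (Htilde F c q1 q2) (mp_integrand F c th q1 q2).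
Proof.
  intros Hth Hq1 Hq2. unfold Htilde. apply inf_lower_bound with 0.
  - intros w [t [Ht ->]]. apply integrand_nonneg; auto.
  - exists th; split; auto.
Qed.

Lemma Htilde_nonneg q1 q2 : 0 <= q1 -> 0 <= q2 -> ER_le (Fin 0) (Htilde F c q1 q2).
Proof. intros Hq1 Hq2. apply Htilde_ge. intros th Hth. apply integrand_nonneg; auto. Qed.

Lemma Hmarg_ge_affine al be ga :
  (forall th q1 q2, 0 < th -> 0 <= q1 -> 0 <= q2 ->
     ER_le (Fin (al * q1 + be * q2 + ga)) (mp_integrand F c th q1 q2)) ->
  forall r1 r2, ER_le (Fin (al * r1 + be * r2 + ga)) (lsc_env (Htilde F c) r1 r2).
Proof.
  intros Hb. apply env_ge_affine. intros q1 q2 Hq1 Hq2.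
  apply Htilde_ge. intros th Hth. apply Hb; auto.
Qed.

Lemma Hmarg_nonneg r1 r2 : ER_le (Fin 0) (lsc_env (Htilde F c) r1 r2).
Proof.
  eapply ER_le_Fin_mono; [|apply (Hmarg_ge_affine 0 0 0)]; [lra|].
  intros th q1 q2 Hth Hq1 Hq2.
  eapply ER_le_Fin_mono; [|apply integrand_nonneg; auto]. lra.
Qed.

(** On the diagonal, H̃_c(q,q) ≤ q c (take θ = q), so H_c(r,r) = 0 when r c = 0. *)
Lemma Hmarg_diag r : 0 <= r -> r * c = 0 -> lsc_env (Htilde F c) r r = Fin 0.
Proof.
  intros Hr Hrc. apply ER_le_antisym_0; [apply Hmarg_nonneg|].
  apply (env_diag_nonpos _ 0 c); auto; [exact Htilde_nonneg|].
  intros e He.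
  eapply ER_le_trans; [apply (Htilde_le_integrand (r + e)); lra|].
  unfold mp_integrand. rewrite hatF_diag by lra. simpl. nra.
Qed.

(** Unequal masses cost something: with d = (r2-r1)/(2(r1+r2)) the cone gaps
    give the affine minorant k((1-d) q2 - (1+d) q1), positive at (r1,r2). *)
Lemma Hmarg_pos_lt r1 r2 : 0 <= r1 -> r1 < r2 ->
  ER_lt (Fin 0) (lsc_env (Htilde F c) r1 r2).
Proof.
  intros Hr1 Hlt.
  set (d := (r2 - r1) / (2 * (r1 + r2))).
  assert (Hdd : d * (2 * (r1 + r2)) = r2 - r1) by (unfold d; field; lra).
  assert (Hd : 0 < d <= 1) by (split; nra).
  destruct (integrand_cone_bound d Hd) as [k [Hk Hbound]].
  assert (Hmin : ER_le (Fin (- (k * (1 + d)) * r1 + k * (1 - d) * r2 + 0))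
                       (lsc_env (Htilde F c) r1 r2)).
  { apply Hmarg_ge_affine. intros th q1 q2 Hth Hq1 Hq2.
    eapply ER_le_Fin_mono; [|apply Hbound; auto].
    pose proof (cone_gap_ge_above d th q1). pose proof (cone_gap_ge_below d th q2).
    assert (0 <= th * c) by nra. nra. }
  apply (ER_le_lt_Fin _ _ _ Hmin).
  assert (Hval : (1 - d) * r2 - (1 + d) * r1 = (r2 - r1) / 2) by nra.
  nra.
Qed.

Lemma Hmarg_pos_unbalanced r1 r2 : 0 <= r1 -> 0 <= r2 -> r1 <> r2 ->
  ER_lt (Fin 0) (lsc_env (Htilde F c) r1 r2).
Proof.
  intros Hr1 Hr2 Hne. destruct (Rtotal_order r1 r2) as [Hlt|[Heq|Hgt]].
  - apply Hmarg_pos_lt; auto.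
  - contradiction.
  - rewrite env_sym by apply Htilde_sym. apply Hmarg_pos_lt; auto.
Qed.

(** A positive cost is paid by any nonzero mass: with d = 1/2 and
    m = min(k, c) the integrand dominates m (q1 + q2)/4. *)
Lemma Hmarg_pos_cost r1 r2 : 0 < c -> 0 <= r1 -> 0 <= r2 -> 0 < r1 + r2 ->
  ER_lt (Fin 0) (lsc_env (Htilde F c) r1 r2).
Proof.
  intros Hc Hr1 Hr2 Hsum.
  destruct (integrand_cone_bound (1/2) ltac:(lra)) as [k [Hk Hbound]].
  set (m := Rmin k c).
  assert (Hm : 0 < m) by (apply Rmin_pos; lra).
  assert (Hmk : m <= k) by apply Rmin_l.
  assert (Hmc : m <= c) by apply Rmin_r.
  assert (Hmin : ER_le (Fin (m / 4 * r1 + m / 4 * r2 + 0)) (lsc_env (Htilde F c) r1 r2)).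
  { apply Hmarg_ge_affine. intros th q1 q2 Hth Hq1 Hq2.
    eapply ER_le_Fin_mono; [|apply Hbound; auto].
    pose proof (cone_gap_half_sum th q1 q2) as Hsum4.
    pose proof (cone_gap_nonneg (1/2) th q1). pose proof (cone_gap_nonneg (1/2) th q2).
    assert (m * (cone_gap (1/2) th q1 + cone_gap (1/2) th q2)
            <= k * (cone_gap (1/2) th q1 + cone_gap (1/2) th q2))
      by (apply Rmult_le_compat_r; lra).
    assert (m * th <= th * c) by nra.
    nra. }
  apply (ER_le_lt_Fin _ _ _ Hmin). nra.
Qed.

Lemma Hmarg_zero_iff r1 r2 : 0 <= r1 -> 0 <= r2 ->
  lsc_env (Htilde F c) r1 r2 = Fin 0 <-> r1 = r2 /\ r1 * c = 0.
Proof.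
  intros Hr1 Hr2. split.
  - intros Hzero.
    assert (Heq : r1 = r2).
    { destruct (Req_dec r1 r2) as [|Hne]; auto. exfalso.
      pose proof (Hmarg_pos_unbalanced r1 r2 Hr1 Hr2 Hne) as Hpos.
      rewrite Hzero in Hpos. simpl in Hpos. lra. }
    split; [exact Heq|]. subst r2.
    destruct (Req_dec r1 0) as [->|Hr0]; [ring|].
    destruct (Req_dec c 0) as [->|Hc0]; [ring|]. exfalso.
    pose proof (Hmarg_pos_cost r1 r1 ltac:(lra) Hr1 Hr1 ltac:(lra)) as Hpos.
    rewrite Hzero in Hpos. simpl in Hpos. lra.
  - intros [<- Hrc]. apply Hmarg_diag; auto.
Qed.

End FiniteCost.

End StrictMinimum.

Theorem mainTheorem13 (F : R -> ER) (X : Type) (c : X -> X -> ER)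
  (HF : Gamma0 F)
  (Hstrict : forall s, 0 <= s -> s <> 1 -> ER_lt (Fin 0) (F s))
  (Hcnn : forall x1 x2, ER_le (Fin 0) (c x1 x2))
  (Hcsym : forall x1 x2, c x1 x2 = c x2 x1)
  (Hc0 : forall x1 x2, c x1 x2 = Fin 0 <-> x1 = x2) :
  forall (x1 : X) (r1 : R) (x2 : X) (r2 : R), 0 <= r1 -> 0 <= r2 ->
    ER_le (Fin 0) (Hcost F c x1 r1 x2 r2) /\
    Hcost F c x1 r1 x2 r2 = Hcost F c x2 r2 x1 r1 /\
    (Hcost F c x1 r1 x2 r2 = Fin 0 <->
       (r1 = 0 /\ r2 = 0) \/ (r1 = r2 /\ x1 = x2)).
Proof.
  intros x1 r1 x2 r2 Hr1 Hr2.
  destruct HF as (F_nonneg & F_convex & _ & F_one).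
  unfold Hcost. rewrite (Hcsym x2 x1).
  pose proof (Hc0 x1 x2) as Hdiag. pose proof (Hcnn x1 x2) as Hcpos.
  destruct (c x1 x2) as [c0|]; simpl in Hcpos |- *.
  - split; [apply Hmarg_nonneg; auto|].
    split; [apply env_sym, Htilde_sym|].
    rewrite Hmarg_zero_iff by auto. split.
    + intros [<- Hrc]. destruct (Rmult_integral _ _ Hrc) as [-> | ->]; [left; auto|].
      right. split; [reflexivity|]. apply Hdiag. reflexivity.
    + intros [[-> ->]|[<- Hx]]; split; auto; [ring|].
      apply Hdiag in Hx. injection Hx as ->. ring.
  - assert (Hx : x1 <> x2) by (intro E; apply Hdiag in E; discriminate).
    destruct (ER_scal_pos_zero (r1 + r2) (F 0) ltac:(lra) (Hstrict 0 ltac:(lra) ltac:(lra)))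
      as [Hnn Hzero].
    split; [exact Hnn|]. split; [rewrite Rplus_comm; reflexivity|].
    rewrite Hzero. split; [intros; left; lra|].
    intros [[-> ->]|[_ E]]; [ring|contradiction].
Qed.
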